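(* Let $U$ be a semiunitary space of dimension $n$ whose scalar product has rank $m$, and let $\mathcal A:U\to U$ be a linear operator. The following are equivalent: (a) $\mathcal A$ is bounded, i.e. there exists a positive $c\in\mathbb R$ with $\|\mathcal Au\|\le c\|u\|$ for all $u\in U$; (b) the subspace $U_0=\{u\in U : \langle u,u\rangle=0\}$ is invariant under $\mathcal A$; (c) the matrix of $\mathcal A$ in each $m$-orthonormal basis has the lower block triangular form $\begin{bmatrix}B&0\\C&D\end{bmatrix}$ with $B$ of size $m\times m$.
   Context: A semiunitary space is a finite-dimensional complex vector space $U$ with a positive semidefinite Hermitian form $\langle\cdot,\cdot\rangle$ (semilinear in the first argument, linear in the second). The length of $u$ is $\|u\|=\sqrt{\langle u,u\rangle}$. A basis $e_1,\dots,e_n$ of $U$ is $m$-orthonormal if the Gram matrix $[\langle e_i,e_j\rangle]$ equals $\begin{bmatrix}I_m&0\\0&0\end{bmatrix}$. The matrix of an operator in a basis has as its $j$-th column the coordinate vector of the image of the $j$-th basis vector. *)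

From HB Require Import structures.
From mathcomp Require Import all_boot all_order all_algebra.
Set Implicit Arguments. Unset Strict Implicit. Unset Printing Implicit Defensive.
Import Order.TTheory GRing.Theory Num.Theory.
Local Open Scope ring_scope.

(* Scalars: an arbitrary numeric algebraically closed field C (the complex
   numbers are an instance); conjugation is z^*, lengths use sqrtC. *)

(* A positive semidefinite Hermitian form on U, linear in the second argument
   (semilinearity in the first follows from Hermitian symmetry). *)
Definition semiunitary_form (C : numClosedFieldType) (U : vectType C)
  (f : U -> U -> C) : Prop :=
  [/\ (forall (u v w : U) (a : C), f u (a *: v + w) = a * f u v + f u w),
      (forall u v : U, f v u = (f u v)^*) &
      (forall u : U, 0 <= f u u)].

Definition slen (C : numClosedFieldType) (U : vectType C)
  (f : U -> U -> C) (u : U) : C := sqrtC (f u u).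

Definition gram (C : numClosedFieldType) (U : vectType C) (f : U -> U -> C)
  (k : nat) (e : k.-tuple U) : 'M[C]_k :=
  \matrix_(i < k, j < k) f (tnth e i) (tnth e j).

Definition form_rank (C : numClosedFieldType) (U : vectType C)
  (f : U -> U -> C) : nat :=
  \rank (gram f (vbasis {:U})).

Definition m_orthonormal (C : numClosedFieldType) (U : vectType C)
  (f : U -> U -> C) (n m : nat) (e : n.-tuple U) : Prop :=
  basis_of fullv e /\
  forall i j : 'I_n,
    f (tnth e i) (tnth e j) = if (i == j) && (i < m)%N then 1 else 0.

Definition op_matrix (C : numClosedFieldType) (U : vectType C) (n : nat)
  (e : n.-tuple U) (A : 'End(U)) : 'M[C]_n :=
  \matrix_(i < n, j < n) coord e i (A (tnth e j)).

Definition bounded_op (C : numClosedFieldType) (U : vectType C)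
  (f : U -> U -> C) (A : 'End(U)) : Prop :=
  exists c : C, [/\ c \is Num.real, 0 < c &
    forall u : U, slen f (A u) <= c * slen f u].

Definition isotropic_part (C : numClosedFieldType) (U : vectType C)
  (f : U -> U -> C) : pred U := [pred u | f u u == 0].

Definition lower_block_triangular (C : numClosedFieldType) (n m : nat)
  (M : 'M[C]_n) : Prop :=
  forall i j : 'I_n, (i < m)%N -> (m <= j)%N -> M i j = 0.

(* Splitting off unit vectors one at a time, and using polarization once the
   remaining subspace is totally isotropic, diagonalises the form; since the
   rank of a Gram matrix does not depend on the basis, this yields an
   m-orthonormal basis e, in which <u,u> = \sum_(i < m) |x_i|^2 for the
   coordinates x of u. Hence U_0 is the span of e_m, ..., e_(n-1), and
   A U_0 <= U_0 says exactly that the coordinates i < m of A e_j vanish for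
   j >= m, i.e. (c). Under (c) the first m coordinates of A u only depend on
   those of u, each of which is at most ||u||, and ||Au|| <= \sum_(i < m)
   |(Au)_i| bounds ||Au|| by a multiple of ||u||. Conversely a bounded
   operator maps vectors of length 0 to vectors of length 0. *)

From HB Require Import structures.
From mathcomp Require Import all_boot all_order all_algebra.
From Stdlib Require Import Classical.
Set Implicit Arguments. Unset Strict Implicit. Unset Printing Implicit Defensive.
Import Order.TTheory GRing.Theory Num.Theory.
Local Open Scope ring_scope.

Lemma sum_sqr_le_sqr_sum (R : numDomainType) (I : finType) (P : pred I)
    (F : I -> R) : (forall i, P i -> 0 <= F i) ->
  \sum_(i | P i) F i ^+ 2 <= (\sum_(i | P i) F i) ^+ 2.
Proof.
move=> F_ge0; rewrite [leRHS]expr2 mulr_suml; apply: ler_sum => i Pi.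
rewrite expr2 ler_wpM2l ?F_ge0 // (bigD1 i) //= lerDl.
by apply: sumr_ge0 => j /andP[Pj _]; apply: F_ge0.
Qed.

Lemma coord_op_matrix (C : numClosedFieldType) (U : vectType C) n
    (e : n.-tuple U) (A : 'End(U)) u i : basis_of fullv e ->
  coord e i (A u) = \sum_j coord e j u * op_matrix e A i j.
Proof.
move=> e_basis; rewrite {1}(coord_basis e_basis (memvf u)) !linear_sum.
by apply: eq_bigr => j _; rewrite !linearZ mxE (tnth_nth 0).
Qed.

Section SesquilinearForm.
Variables (C : numClosedFieldType) (U : vectType C) (f : U -> U -> C).
Hypothesis f_linear :
  forall (u v w : U) (a : C), f u (a *: v + w) = a * f u v + f u w.
Hypothesis f_hermitian : forall u v : U, f v u = (f u v)^*.

Lemma form0r u : f u 0 = 0.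
Proof. by have := f_linear u u u (-1); rewrite scaleN1r addNr mulN1r addNr. Qed.

Lemma formDr u v w : f u (v + w) = f u v + f u w.
Proof. by have := f_linear u v w 1; rewrite scale1r mul1r. Qed.

Lemma formZr u v a : f u (a *: v) = a * f u v.
Proof. by have := f_linear u v 0 a; rewrite !addr0 form0r addr0. Qed.

Lemma formNr u v : f u (- v) = - f u v.
Proof. by rewrite -scaleN1r formZr mulN1r. Qed.

Lemma formDl u v w : f (v + w) u = f v u + f w u.
Proof.
by rewrite (f_hermitian u) (f_hermitian u v) (f_hermitian u w) formDr rmorphD.
Qed.

Lemma formZl u v a : f (a *: v) u = a^* * f v u.
Proof. by rewrite (f_hermitian u) (f_hermitian u v) formZr rmorphM. Qed.

Lemma form_sumr (I : Type) (r : seq I) (P : pred I) (F : I -> U) u :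
  f u (\sum_(i <- r | P i) F i) = \sum_(i <- r | P i) f u (F i).
Proof. by elim/big_rec2: _ => [|i x y _ <-]; rewrite ?form0r ?formDr. Qed.

Lemma form_suml (I : Type) (r : seq I) (P : pred I) (F : I -> U) u :
  f (\sum_(i <- r | P i) F i) u = \sum_(i <- r | P i) f (F i) u.
Proof.
elim/big_rec2: _ => [|i x y _ <-]; last by rewrite formDl.
by rewrite f_hermitian form0r conjC0.
Qed.

Definition form_functional (x : U) : U -> C^o := f x.

Lemma form_functional_linear x : linear (form_functional x).
Proof. by move=> a u v; apply: f_linear. Qed.

HB.instance Definition _ x := GRing.isLinear.Build C U C^o *:%R
  (form_functional x) (form_functional_linear x).

Lemma form_coord n (e : n.-tuple U) u v : basis_of fullv e ->
  f u v = \sum_i \sum_j (coord e i u)^* * coord e j v * f (tnth e i) (tnth e j).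
Proof.
move=> e_basis.
rewrite {1}(coord_basis e_basis (memvf u)) {1}(coord_basis e_basis (memvf v)).
rewrite form_suml; apply: eq_bigr => i _.
rewrite formZl form_sumr mulr_sumr; apply: eq_bigr => j _.
by rewrite formZr mulrA !(tnth_nth 0).
Qed.

Lemma gram_change_basis n k (e : n.-tuple U) (b : k.-tuple U) :
  basis_of fullv e ->
  let P := \matrix_(i < n, j < k) coord e i (tnth b j) in
  gram f b = (map_mx Num.conj P)^T *m gram f e *m P.
Proof.
move=> e_basis P; apply/matrixP => j l; rewrite !mxE (form_coord _ _ e_basis).
under [RHS]eq_bigr do rewrite mxE big_distrl /=.
rewrite [RHS]exchange_big; apply: eq_bigr => i _; apply: eq_bigr => i' _.
by rewrite !mxE mulrAC.
Qed.

Lemma rank_gram_le n k (e : n.-tuple U) (b : k.-tuple U) : basis_of fullv e ->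
  (\rank (gram f b) <= \rank (gram f e))%N.
Proof.
move=> e_basis; rewrite (gram_change_basis b e_basis) /=.
exact: leq_trans (mxrankM_maxl _ _) (mxrankM_maxr _ _).
Qed.

Lemma form_isotropic_polar v w : f v v = 0 -> f w w = 0 ->
  f (v + w) (v + w) = 0 -> f (v + 'i *: w) (v + 'i *: w) = 0 -> f v w = 0.
Proof.
move=> vv0 ww0; rewrite !formDl !formDr !formZl !formZr vv0 ww0 conjCi.
rewrite !mulr0 !addr0 !add0r => /eqP; rewrite addrC addr_eq0 => /eqP ->.
rewrite mulrN mulNr opprK -mulrDr => /eqP.
rewrite mulf_eq0 (negbTE (neq0Ci C)) -mulr2n -mulr_natr mulf_eq0 pnatr_eq0.
by rewrite orbF => /eqP.
Qed.

Lemma totally_isotropic_form0 (V : {vspace U}) :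
  {in V, forall v, f v v = 0} -> {in V &, forall v w, f v w = 0}.
Proof.
move=> V_iso v w vV wV.
by apply: form_isotropic_polar; apply: V_iso; rewrite ?memvD ?memvZ.
Qed.

Definition pid_gram (s : seq U) (k : nat) : Prop :=
  forall i j, (i < size s)%N -> (j < size s)%N ->
    f s`_i s`_j = if (i == j) && (i < k)%N then 1 else 0.

Hypothesis f_ge0 : forall u : U, 0 <= f u u.

Lemma form_normalize v : f v v != 0 ->
  let e := (sqrtC (f v v))^-1 *: v in f e e = 1.
Proof.
move=> vv_neq0; have vv_gt0 : 0 < f v v by rewrite lt_def vv_neq0 f_ge0.
rewrite /= formZl formZr conj_Creal ?rpredV ?sqrtC_real ?ltW // mulrA.
by rewrite -expr2 exprVn sqrtCK mulVf.
Qed.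

Definition orth_in (V : {vspace U}) (e : U) : {vspace U} :=
  (V :&: lker (linfun (form_functional e)))%VS.

Lemma mem_orth_in (V : {vspace U}) e w :
  (w \in orth_in V e) = (w \in V) && (f e w == 0).
Proof. by rewrite memv_cap memv_ker lfunE. Qed.

Lemma dim_orth_in_lt (V : {vspace U}) e : e \in V -> f e e = 1 ->
  (\dim (orth_in V e) < \dim V)%N.
Proof.
move=> eV ee1; rewrite ltn_neqAle dimvS ?capvSl // andbT.
apply: contraL eV => /eqP dim_eq.
have /eqP <- : orth_in V e == V.
  by rewrite -(dimv_leqif_eq (capvSl _ _)).2 dim_eq.
by rewrite mem_orth_in ee1 oner_eq0 andbF.
Qed.

Lemma pid_gram_cons (V : {vspace U}) e s k : e \in V -> f e e = 1 ->
  basis_of (orth_in V e) s -> pid_gram s k ->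
  basis_of V (e :: s) /\ pid_gram (e :: s) k.+1.
Proof.
move=> eV ee1 s_basis s_gram.
have /andP[/eqP span_s _] := s_basis.
have e_orth_s j : (j < size s)%N -> f e s`_j = 0.
  move=> lt_j; have := memv_span (mem_nth 0 lt_j).
  by rewrite span_s mem_orth_in => /andP[_ /eqP].
split.
  move: s_basis; rewrite !basisEdim /= => /andP[_ size_s].
  rewrite (leq_ltn_trans size_s (dim_orth_in_lt eV ee1)) andbT.
  apply/subvP => w wV; rewrite span_cons span_s.
  rewrite -[w](subrK (f e w *: e)) addrC memv_add ?memvZ ?memv_line //.
  by rewrite mem_orth_in memvB ?memvZ //= formDr formNr formZr ee1 mulr1 subrr.
move=> [|i] [|j] /= lt_i lt_j; first by rewrite ee1.
- exact: e_orth_s.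
- by rewrite f_hermitian e_orth_s ?conjC0.
- exact: s_gram.
Qed.

Lemma exists_pid_gram_basis (V : {vspace U}) :
  exists s, basis_of V s /\ exists k, pid_gram s k.
Proof.
have [d] := ubnP (\dim V); elim: d V => // d IH V lt_dimV.
case: (classic (exists2 v, v \in V & f v v != 0)) => [[v vV vv_neq0]|no_v].
  set e := (sqrtC (f v v))^-1 *: v.
  have ee1 : f e e = 1 by apply: form_normalize.
  have eV : e \in V by rewrite memvZ.
  have [|s [s_basis [k s_gram]]] := IH (orth_in V e).
    by rewrite -ltnS (leq_trans _ lt_dimV) // ltnS dim_orth_in_lt.
  have [es_basis es_gram] := pid_gram_cons eV ee1 s_basis s_gram.
  by exists (e :: s); split; last exists k.+1.
have V_iso : {in V, forall v, f v v = 0}.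
  by move=> v vV; apply/eqP/negP => /negP vv_neq0; apply: no_v; exists v.
exists (vbasis V); split; first exact: vbasisP.
exists 0%N => i j lt_i lt_j; rewrite ltn0 andbF.
by apply: (totally_isotropic_form0 V_iso); apply/vbasis_mem/mem_nth.
Qed.

Lemma exists_m_orthonormal (n m : nat) : \dim {:U} = n -> form_rank f = m ->
  exists e : n.-tuple U, m_orthonormal f m e.
Proof.
move=> dimU rank_f.
have [s [s_basis [k s_gram]]] := exists_pid_gram_basis fullv.
have /eqP size_s : size s = n by rewrite -dimU (size_basis (X := in_tuple s)).
pose e := Tuple size_s.
have e_gram (i j : 'I_n) :
    f (tnth e i) (tnth e j) = if (i == j) && (i < minn k n)%N then 1 else 0.
  by rewrite !(tnth_nth 0) ltn_min ltn_ord andbT s_gram ?(eqP size_s).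
have gram_e : gram f e = pid_mx (minn k n).
  by apply/matrixP => i j; rewrite !mxE e_gram; case: ifP.
have -> : m = minn k n.
  rewrite -rank_f -[minn k n](@rank_pid_mx C n n) ?geq_minr // -gram_e.
  by apply/eqP; rewrite eqn_leq !rank_gram_le ?vbasisP.
by exists e.
Qed.

Section MOrthonormalBasis.
Variables (n m : nat) (e : n.-tuple U).
Hypothesis e_orthonormal : m_orthonormal f m e.

Lemma m_orthonormal_form u v :
  f u v = \sum_(i < n | (i < m)%N) (coord e i u)^* * coord e i v.
Proof.
have [e_basis e_gram] := e_orthonormal.
rewrite (form_coord _ _ e_basis) [RHS]big_mkcond; apply: eq_bigr => i _.
rewrite (bigD1 i) //= big1 => [|j ji].
  by rewrite e_gram eqxx addr0 /=; case: ifP; rewrite ?mulr1 ?mulr0.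
by rewrite e_gram eq_sym (negbTE ji) mulr0.
Qed.

Lemma m_orthonormal_form_sqr u :
  f u u = \sum_(i < n | (i < m)%N) `|coord e i u| ^+ 2.
Proof.
by rewrite m_orthonormal_form; apply: eq_bigr => i _; rewrite normCK mulrC.
Qed.

Lemma m_orthonormal_isotropicP u :
  f u u = 0 <-> forall i : 'I_n, (i < m)%N -> coord e i u = 0.
Proof.
rewrite m_orthonormal_form_sqr; split => [u_iso i lt_im|u_low].
  have coord_sqr_ge0 (j : 'I_n) : (j < m)%N -> 0 <= `|coord e j u| ^+ 2.
    by rewrite exprn_ge0.
  move: (psumr_eq0P coord_sqr_ge0 u_iso lt_im) => /eqP.
  by rewrite sqrf_eq0 normr_eq0 => /eqP.
by rewrite big1 // => i lt_im; rewrite u_low ?normr0 ?expr0n.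
Qed.

Lemma coord_le_slen u (i : 'I_n) : (i < m)%N -> `|coord e i u| <= slen f u.
Proof.
move=> lt_im; rewrite /slen m_orthonormal_form_sqr -(sqrCK (normr_ge0 _)).
rewrite ler_sqrtC ?nnegrE ?exprn_ge0 ?sumr_ge0 // => [|j _]; last first.
  exact: exprn_ge0.
by rewrite (bigD1 i) //= lerDl sumr_ge0 // => j _; apply: exprn_ge0.
Qed.

Lemma slen_le_sum_coord u :
  slen f u <= \sum_(i < n | (i < m)%N) `|coord e i u|.
Proof.
rewrite /slen m_orthonormal_form_sqr.
rewrite -(sqrCK (sumr_ge0 _ (fun i _ => normr_ge0 (coord e i u)))).
rewrite ler_sqrtC ?nnegrE ?exprn_ge0 ?sumr_ge0 // => [|i _]; last first.
  exact: exprn_ge0.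
by apply: sum_sqr_le_sqr_sum => i _; apply: normr_ge0.
Qed.

Lemma isotropic_stable_lower_block (A : 'End(U)) :
  {in isotropic_part f, forall u, A u \in isotropic_part f} ->
  lower_block_triangular m (op_matrix e A).
Proof.
have [_ e_gram] := e_orthonormal.
move=> A_stable i j lt_im le_mj; rewrite mxE.
have ej_iso : tnth e j \in isotropic_part f.
  by rewrite inE e_gram eqxx ltnNge le_mj.
by have /eqP/m_orthonormal_isotropicP -> := A_stable _ ej_iso.
Qed.

Lemma lower_block_isotropic_stable (A : 'End(U)) :
  lower_block_triangular m (op_matrix e A) ->
  {in isotropic_part f, forall u, A u \in isotropic_part f}.
Proof.
move=> A_low u; rewrite !inE => /eqP/m_orthonormal_isotropicP u_iso.
apply/eqP/m_orthonormal_isotropicP => i lt_im.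
rewrite (coord_op_matrix _ _ _ e_orthonormal.1) big1 // => j _.
by case: (ltnP j m) => [/u_iso -> | /(A_low i j lt_im) ->];
  rewrite ?mul0r ?mulr0.
Qed.

Lemma lower_block_bounded (A : 'End(U)) :
  lower_block_triangular m (op_matrix e A) -> bounded_op f A.
Proof.
move=> A_low; pose K := \sum_(i < n | (i < m)%N) \sum_j `|op_matrix e A i j|.
have K_ge0 : 0 <= K by do 2![apply: sumr_ge0 => ? _].
exists (K + 1); split; [exact/gtr0_real/ltr_wpDl | exact: ltr_wpDl |].
move=> u; apply: le_trans (slen_le_sum_coord (A u)) _.
apply: le_trans (_ : K * slen f u <= _); last first.
  by rewrite mulrDl mul1r lerDl sqrtC_ge0.
rewrite mulr_suml ler_sum // => i lt_im.
rewrite (coord_op_matrix _ _ _ e_orthonormal.1) mulr_suml.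
apply: le_trans (ler_norm_sum _ _ _) (ler_sum _ _) => j _.
rewrite normrM mulrC; case: (ltnP j m) => [lt_jm | le_mj].
  by rewrite ler_wpM2l ?coord_le_slen.
by rewrite (A_low i j lt_im le_mj) normr0 !mul0r.
Qed.

End MOrthonormalBasis.

Lemma bounded_isotropic_stable (A : 'End(U)) : bounded_op f A ->
  {in isotropic_part f, forall u, A u \in isotropic_part f}.
Proof.
move=> [c [_ _ A_bounded]] u; rewrite !inE => /eqP u_iso.
have := A_bounded u; rewrite /slen u_iso sqrtC0 mulr0 => Au_le0.
by rewrite -sqrtC_eq0 eq_le Au_le0 sqrtC_ge0 f_ge0.
Qed.

End SesquilinearForm.

Theorem lemma2p1 (C : numClosedFieldType) (U : vectType C) (n m : nat)
  (f : U -> U -> C) (hf : semiunitary_form f)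
  (hn : \dim {:U} = n) (hm : form_rank f = m) (A : 'End(U)) :
  (bounded_op f A <->
     {in isotropic_part f, forall u, A u \in isotropic_part f}) /\
  ({in isotropic_part f, forall u, A u \in isotropic_part f} <->
     (forall e : n.-tuple U, m_orthonormal f m e ->
        lower_block_triangular m (op_matrix e A))).
Proof.
have [f_linear f_hermitian f_ge0] := hf.
have [e e_orthonormal] := exists_m_orthonormal f_linear f_hermitian f_ge0 hn hm.
split; split.
- exact: bounded_isotropic_stable.
- move=> A_stable.
  have A_low :=
    isotropic_stable_lower_block f_linear f_hermitian e_orthonormal A_stable.
  exact (lower_block_bounded f_linear f_hermitian f_ge0 e_orthonormal A_low).
- move=> A_stable e' e'_orthonormal.
  exact (isotropic_stable_lower_block f_linear f_hermitian
           e'_orthonormal A_stable).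
- move=> A_low.
  exact (lower_block_isotropic_stable f_linear f_hermitian e_orthonormal
           (A_low e e_orthonormal)).
Qed.
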